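(* Let $\Pi$ be a convex self-polar pentagon on the unit sphere $S^2\subset\mathbb{R}^3$. Its diagonals bound a smaller pentagon inside $\Pi$; let $P$ be a point inside this smaller pentagon, and let $\rho$ be the central projection (from the center of the sphere) of the relevant open hemisphere onto the plane tangent to $S^2$ at $P$. Then the image $\rho(\Pi)$ is a planar pentagon whose five altitudes (for each vertex, the line through that vertex perpendicular to the opposite side) are concurrent, and they all pass through $P$.
   Context: A spherical pentagon with sides on great circles is self-polar if each vertex is the pole of the great circle containing the opposite side, i.e. each vertex (as a unit vector in $\mathbb{R}^3$) is orthogonal to the plane of the opposite side. Central projection maps a point $v$ of the open hemisphere centered at $P$ to the intersection of the line $\mathbb{R}v$ with the tangent plane $\{x: \langle x,P\rangle=1\}$; it maps great circles to straight lines. *)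

From HB Require Import structures.
From mathcomp Require Import all_boot all_order all_algebra.
Set Implicit Arguments. Unset Strict Implicit. Unset Printing Implicit Defensive.
Import Order.TTheory GRing.Theory Num.Theory.
Local Open Scope ring_scope.

Section Defs.
Variable R : realFieldType.
Notation vec := 'rV[R]_3.

Definition dot (u v : vec) : R := \sum_(k < 3) u 0 k * v 0 k.

Definition det3 (u v w : vec) : R :=
  \det (\matrix_(i < 3, j < 3)
          (if (i : nat) == 0%N then u 0 j else if (i : nat) == 1%N then v 0 j else w 0 j)).

Definition sh (i : 'I_5) (k : nat) : 'I_5 := inZp (i + k).

Definition on_sphere (v : vec) : Prop := dot v v = 1.

(* Convex spherical pentagon with vertices v 0, ..., v 4 (cyclic order):
   for every side [v i, v (i+1)], all other vertices lie strictly on one side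
   of the great circle through that side, with the same orientation for all
   sides. *)
Definition convex_sph_pentagon (v : 'I_5 -> vec) : Prop :=
  (forall i j : 'I_5, j != i -> j != sh i 1 -> 0 < det3 (v i) (v (sh i 1)) (v j)) \/
  (forall i j : 'I_5, j != i -> j != sh i 1 -> det3 (v i) (v (sh i 1)) (v j) < 0).

(* Self-polar: each vertex v i is orthogonal to the plane spanned by the
   opposite side [v (i+2), v (i+3)]. *)
Definition self_polar (v : 'I_5 -> vec) : Prop :=
  forall i : 'I_5, dot (v i) (v (sh i 2)) = 0 /\ dot (v i) (v (sh i 3)) = 0.

(* P lies in the (open) inner pentagon bounded by the diagonals: for every
   diagonal [v i, v (i+2)], P lies strictly on the side of its great circle
   containing v (i+3) (and v (i+4)), i.e. opposite to v (i+1). *)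
Definition in_inner_pentagon (v : 'I_5 -> vec) (P : vec) : Prop :=
  forall i : 'I_5,
    0 < det3 (v i) (v (sh i 2)) P * det3 (v i) (v (sh i 2)) (v (sh i 3)).

(* central projection from the origin onto the tangent plane {x | <x,P> = 1} *)
Definition cproj (P v : vec) : vec := (dot v P)^-1 *: v.

(* w 0..w 4 form a convex planar pentagon in the tangent plane at P
   (orientation measured with the normal P) *)
Definition convex_planar_pentagon (P : vec) (w : 'I_5 -> vec) : Prop :=
  (forall i j : 'I_5, j != i -> j != sh i 1 ->
      0 < det3 P (w (sh i 1) - w i) (w j - w i)) \/
  (forall i j : 'I_5, j != i -> j != sh i 1 ->
      det3 P (w (sh i 1) - w i) (w j - w i) < 0).

End Defs.

From HB Require Import structures.
From mathcomp Require Import all_boot all_order all_algebra.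
From mathcomp Require Import ring.
Set Implicit Arguments. Unset Strict Implicit. Unset Printing Implicit Defensive.
Import Order.TTheory GRing.Theory Num.Theory.
Local Open Scope ring_scope.

(* Let s = +-1 be the orientation of the pentagon, so that s det(v_i, v_(i+1), v_j) > 0
   for the vertices v_j off the side [v_i, v_(i+1)].  A Plücker relation between 3x3
   determinants shows that a point on the inner side of both diagonals through v_k is
   on the inner side of the side [v_k, v_(k+1)]; hence P lies inside the pentagon.
   Self-polarity makes v_i the unit normal of the plane of the opposite side, so Cramer's
   rule gives det(v_(i+2), v_(i+3), P) = det(v_(i+2), v_(i+3), v_i) <v_i, P>, and both
   determinants have sign s: thus <v_i, P> > 0.  Central projection multiplies the
   oriented area det(P, B - A, C - A) of a triangle by the positive factor
   1 / (<a,P> <b,P> <c,P>), so the image is convex.  Finally the altitude condition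
   <P - A, C - D> = 0 holds because <P, X> = 1 for every projected point X, while
   A = rho(v_i) is orthogonal to C = rho(v_(i+2)) and D = rho(v_(i+3)). *)

Lemma mulr_gt0_trans (R : realDomainType) (x y z : R) :
  0 < x * y -> 0 < y * z -> 0 < x * z.
Proof.
move=> xy yz; have y_neq0 : y != 0 by apply: contraTneq yz => ->; rewrite mul0r ltxx.
have : 0 < x * y * (y * z) by rewrite mulr_gt0.
have -> : x * y * (y * z) = x * z * y ^+ 2 by ring.
by rewrite pmulr_lgt0 // exprn_even_gt0 // y_neq0 orbT.
Qed.

Section Sphere3.
Variable R : realFieldType.
Implicit Types (a b c d x y P : 'rV[R]_3) (k : R).

Let comp3 x (n : nat) : R := x 0 (inord n).

Let comp3E x (j : 'I_3) : x 0 j = comp3 x j.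
Proof. by rewrite /comp3 inord_val. Qed.

Let comp3B a b n : comp3 (a - b) n = comp3 a n - comp3 b n.
Proof. by rewrite /comp3 !mxE. Qed.

Let comp3Z k a n : comp3 (k *: a) n = k * comp3 a n.
Proof. by rewrite /comp3 !mxE. Qed.

Let dotE a b :
  dot a b = comp3 a 0 * comp3 b 0 + comp3 a 1 * comp3 b 1 + comp3 a 2 * comp3 b 2.
Proof. by rewrite /dot !big_ord_recl big_ord0 !comp3E /=; ring. Qed.

Let det3E a b c : det3 a b c =
    comp3 a 0 * (comp3 b 1 * comp3 c 2 - comp3 b 2 * comp3 c 1)
  - comp3 a 1 * (comp3 b 0 * comp3 c 2 - comp3 b 2 * comp3 c 0)
  + comp3 a 2 * (comp3 b 0 * comp3 c 1 - comp3 b 1 * comp3 c 0).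
Proof.
rewrite /det3 (expand_det_row _ ord0) !big_ord_recl big_ord0 /cofactor.
rewrite !(expand_det_row _ ord0) !big_ord_recl !big_ord0 /cofactor.
by rewrite !det_mx11 !mxE !comp3E /= /bump /=; ring.
Qed.

Lemma dotC a b : dot a b = dot b a.
Proof. by rewrite !dotE; ring. Qed.

Lemma dotBl a b c : dot (a - b) c = dot a c - dot b c.
Proof. by rewrite !dotE !comp3B; ring. Qed.

Lemma dotBr a b c : dot a (b - c) = dot a b - dot a c.
Proof. by rewrite dotC dotBl !(dotC a). Qed.

Lemma dotZl k a b : dot (k *: a) b = k * dot a b.
Proof. by rewrite !dotE !comp3Z; ring. Qed.

Lemma dotZr k a b : dot a (k *: b) = k * dot a b.
Proof. by rewrite dotC dotZl dotC. Qed.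

Lemma det3_cycle a b c : det3 a b c = det3 b c a.
Proof. by rewrite !det3E; ring. Qed.

Lemma det3Z k1 k2 k3 a b c :
  det3 (k1 *: a) (k2 *: b) (k3 *: c) = k1 * k2 * k3 * det3 a b c.
Proof. by rewrite !det3E !comp3Z; ring. Qed.

Lemma det3_translate a b c : det3 a (b - a) (c - a) = det3 a b c.
Proof. by rewrite !det3E !comp3B; ring. Qed.

Lemma det3_cramer_dot a b c x y : det3 a b c * dot x y =
  det3 x b c * dot a y + det3 a x c * dot b y + det3 a b x * dot c y.
Proof. by rewrite !det3E !dotE; ring. Qed.

Lemma det3_plucker a b c d x :
  det3 a b x * det3 a c d = det3 a b d * det3 a c x - det3 a b c * det3 a d x.
Proof. by rewrite !det3E; ring. Qed.

Lemma det3_unit_normal a b c x :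
  dot c a = 0 -> dot c b = 0 -> dot c c = 1 -> det3 a b x = det3 a b c * dot x c.
Proof.
move=> ca cb cc; rewrite det3_cramer_dot !(dotC _ c) ca cb cc.
by rewrite !mulr0 !add0r mulr1.
Qed.

(* Spherical reading: if x lies on the inner side of both diagonals [a, c] and [d, a]
   of the convex quadrilateral a b c d (orientation s), it lies on the inner side of [a, b]. *)
Lemma inner_side_of_diagonals (s : R) a b c d x :
  0 < s * det3 a b c -> 0 < s * det3 a b d -> 0 < s * det3 c d a ->
  0 < det3 a c x * det3 a c d -> 0 < det3 d a x * det3 d a b ->
  0 < s * det3 a b x.
Proof.
move=> s_abc s_abd s_cda acx dax.
have s_acd : 0 < s * det3 a c d by rewrite det3_cycle.
have s_acx : 0 < s * det3 a c x by apply: mulr_gt0_trans s_acd _; rewrite mulrC.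
have s_adx : 0 < s * - det3 a d x.
  move: dax; have -> : det3 d a x * det3 d a b = det3 a b d * - det3 a d x.
    by rewrite !det3E; ring.
  exact: mulr_gt0_trans s_abd.
rewrite -(pmulr_lgt0 _ s_acd) mulrACA det3_plucker.
have -> : s * s * (det3 a b d * det3 a c x - det3 a b c * det3 a d x) =
    s * det3 a b d * (s * det3 a c x) + s * det3 a b c * (s * - det3 a d x) by ring.
by rewrite addr_gt0 // mulr_gt0.
Qed.

Lemma dot_cproj P x : dot x P != 0 -> dot (cproj P x) P = 1.
Proof. by move=> xP; rewrite /cproj dotZl mulVf. Qed.

Lemma det3_tangent P a b c : dot P P = 1 ->
  dot a P = 1 -> dot b P = 1 -> dot c P = 1 -> det3 P (b - a) (c - a) = det3 a b c.
Proof.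
move=> PP aP bP cP; have := det3_cramer_dot a (b - a) (c - a) P P.
rewrite !dotBl aP bP cP PP subrr !mulr0 !addr0 !mulr1 det3_translate.
by move->.
Qed.

Lemma det3_cproj P a b c :
  dot P P = 1 -> dot a P != 0 -> dot b P != 0 -> dot c P != 0 ->
  det3 P (cproj P b - cproj P a) (cproj P c - cproj P a) =
  (dot a P)^-1 * (dot b P)^-1 * (dot c P)^-1 * det3 a b c.
Proof. by move=> PP aP bP cP; rewrite det3_tangent ?dot_cproj // det3Z. Qed.

Lemma cproj_altitude P a c d :
  dot a c = 0 -> dot a d = 0 -> dot c P != 0 -> dot d P != 0 ->
  dot (P - cproj P a) (cproj P c - cproj P d) = 0.
Proof.
move=> ac ad cP dP.
rewrite dotBl !dotBr !(dotC P) !dot_cproj // /cproj !dotZl !dotZr ac ad.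
by rewrite !mulr0 !subrr.
Qed.

End Sphere3.

Lemma sh0 (i : 'I_5) : sh i 0 = i.
Proof. by apply: val_inj; rewrite /= addn0 modn_small. Qed.

Lemma sh_add (i : 'I_5) a b : sh (sh i a) b = sh i (a + b).
Proof. by apply: val_inj; rewrite /= modnDml addnA. Qed.

Lemma eq_sh (i : 'I_5) a b : (sh i a == sh i b) = (a == b %[mod 5]).
Proof. by rewrite -val_eqE /= eqn_modDl. Qed.

Lemma sh_eq_self (i : 'I_5) a : (sh i a == i) = (a %% 5 == 0)%N.
Proof. by rewrite -{2}(sh0 i) eq_sh mod0n. Qed.

Lemma strict_sides_sign (R : realDomainType) (f : 'I_5 -> 'I_5 -> R) :
  (forall i j : 'I_5, j != i -> j != sh i 1 -> 0 < f i j) \/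
  (forall i j : 'I_5, j != i -> j != sh i 1 -> f i j < 0) <->
  exists2 s : R, s = 1 \/ s = -1 &
    forall i j : 'I_5, j != i -> j != sh i 1 -> 0 < s * f i j.
Proof.
split=> [[pos | neg] | [s [-> | ->] fs]].
- by exists 1; [left | move=> i j ji ji1; rewrite mul1r pos].
- by exists (-1); [right | move=> i j ji ji1; rewrite mulN1r oppr_gt0 neg].
- by left=> i j ji ji1; rewrite -[f i j]mul1r fs.
- by right=> i j ji ji1; rewrite -oppr_gt0 -mulN1r fs.
Qed.

Section SelfPolarPentagon.
Variables (R : realFieldType) (v : 'I_5 -> 'rV[R]_3) (P : 'rV[R]_3) (s : R).
Hypothesis convex_s : forall i j : 'I_5, j != i -> j != sh i 1 ->
  0 < s * det3 (v i) (v (sh i 1)) (v j).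
Hypothesis inner : in_inner_pentagon v P.

Let sh21 (k : 'I_5) : sh (sh k 2) 1 = sh k 3.
Proof. by apply/eqP; rewrite sh_add eq_sh. Qed.

Let convex_opposite k : 0 < s * det3 (v (sh k 2)) (v (sh k 3)) (v k).
Proof. by rewrite -sh21 convex_s // ?sh21 eq_sym sh_eq_self. Qed.

Lemma inside_pentagon k : 0 < s * det3 (v k) (v (sh k 1)) P.
Proof.
have k5 : sh (sh k 3) 2 = k by apply/eqP; rewrite sh_add sh_eq_self.
have k6 : sh (sh k 3) 3 = sh k 1 by apply/eqP; rewrite sh_add eq_sh.
apply: (@inner_side_of_diagonals _ s _ _ (v (sh k 2)) (v (sh k 3))).
- by rewrite convex_s // ?sh_eq_self ?eq_sh.
- by rewrite convex_s // ?sh_eq_self ?eq_sh.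
- exact: convex_opposite.
- exact: inner.
- by have := inner (sh k 3); rewrite k5 k6.
Qed.

Hypotheses (unit_v : forall i, on_sphere (v i)) (polar : self_polar v).

Lemma vertex_in_hemisphere i : 0 < dot (v i) P.
Proof.
have [p2 p3] := polar i.
have := inside_pentagon (sh i 2).
rewrite sh21 (det3_unit_normal _ p2 p3 (unit_v i)) mulrA pmulr_rgt0 ?convex_opposite //.
by rewrite dotC.
Qed.

Lemma cproj_sides_sign : on_sphere P ->
  forall i j : 'I_5, j != i -> j != sh i 1 ->
  0 < s * det3 P (cproj P (v (sh i 1)) - cproj P (v i)) (cproj P (v j) - cproj P (v i)).
Proof.
move=> unit_P i j ji ji1; have pos := vertex_in_hemisphere.
rewrite det3_cproj ?lt0r_neq0 // mulrCA pmulr_rgt0 ?convex_s //.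
by rewrite !mulr_gt0 // invr_gt0.
Qed.

End SelfPolarPentagon.

Theorem mainTheorem2 (R : realFieldType) (v : 'I_5 -> 'rV[R]_3) (P : 'rV[R]_3) :
  (forall i, on_sphere (v i)) ->
  convex_sph_pentagon v ->
  self_polar v ->
  on_sphere P ->
  in_inner_pentagon v P ->
  (* the whole pentagon lies in the open hemisphere centred at P *)
  (forall i, 0 < dot (v i) P) /\
  (* its image is a (convex) planar pentagon in the tangent plane at P *)
  convex_planar_pentagon P (fun i => cproj P (v i)) /\
  (* the altitude from each vertex (perpendicular to the opposite side)
     passes through P; hence the five altitudes are concurrent at P *)
  (forall i : 'I_5,
     dot (P - cproj P (v i))
         (cproj P (v (sh i 2)) - cproj P (v (sh i 3))) = 0).
Proof.
move=> unit_v /strict_sides_sign[s s_pm convex_s] polar unit_P inner.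
have hemisphere := vertex_in_hemisphere convex_s inner unit_v polar.
split=> //; split.
  by apply/strict_sides_sign; exists s => //; apply: cproj_sides_sign.
move=> i; have [p2 p3] := polar i.
by apply: cproj_altitude; rewrite // lt0r_neq0.
Qed.
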